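(* Let $f$ be a fractal, let $g$ be any multivalued function between represented spaces and let $n \geq 1$. If $f \leq_W g \star \mathrm{C}_{\{1,\ldots,n\}}$, then $f \leq_W g$.
   Context: A represented space is $\mathbf{X} = (X,\delta_X)$ with $\delta_X :\subseteq \mathbb{N}^\mathbb{N}\to X$ a partial surjection. A realizer of $f :\subseteq \mathbf{X}\rightrightarrows\mathbf{Y}$ is a partial $F$ on Baire space with $\delta_Y F(p)\in f(\delta_X(p))$ for all $p\in\operatorname{dom}(f\delta_X)$. $f\leq_W g$ iff there are computable partial $K,H$ on Baire space such that $p\mapsto K\langle p,G(H(p))\rangle$ realizes $f$ for every realizer $G$ of $g$; $\equiv_W$ is the induced equivalence. The composition product is $f \star g := \sup_{\leq_W}\{f'\circ g' \mid f'\leq_W f,\ g'\leq_W g\}$ (this supremum always exists). $\mathrm{C}_{\{1,\ldots,n\}}$ is closed choice on the discrete space $\{1,\ldots,n\}$ (input: a non-empty subset given by an enumeration of its complement; output: an element of it). For $A\subseteq\mathbb{N}^\mathbb{N}$, $\mathbf{X}_A := (\delta_X[A], \delta_X|_A)$ and for $f:\subseteq\mathbf{X}\rightrightarrows\mathbf{Y}$, $f_A :\subseteq\mathbf{X}_A\rightrightarrows\mathbf{Y}$ is the induced map. $0$ denotes the Weihrauch degree of the nowhere defined function. $f$ is a fractal iff there is some $g:\mathbf{X}\rightrightarrows\mathbf{Y}$ with $\mathbf{X}\neq\emptyset$ such that for every clopen $A\subseteq\mathbb{N}^\mathbb{N}$ either $g_A\equiv_W f$ or $g_A\equiv_W 0$.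 *)

From mathcomp Require Import all_boot.
From Stdlib Require Import ProofIrrelevance.

Set Implicit Arguments.
Unset Strict Implicit.
Unset Printing Implicit Defensive.

Definition Baire := nat -> nat.

Definition pairB (p q : Baire) : Baire :=
  fun n => if odd n then q n./2 else p n./2.

Definition prefix (p : Baire) (k : nat) : seq nat := map p (iota 0 k).

Definition cpair (a b : nat) : nat := ((a + b) * (a + b).+1) %/ 2 + b.
Fixpoint code_seq (s : seq nat) : nat :=
  match s with [::] => 0 | x :: s' => (cpair x (code_seq s')).+1 end.

Inductive recf : Type :=
| RZero : recf
| RSucc : recf
| RProj : nat -> recf
| RComp : recf -> list recf -> recf
| RPrec : recf -> recf -> recf
| RMin  : recf -> recf.

Inductive evalR : recf -> seq nat -> nat -> Prop :=
| eZero l : evalR RZero l 0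
| eSucc l : evalR RSucc l (nth 0 l 0).+1
| eProj i l : evalR (RProj i) l (nth 0 l i)
| eComp f gs l ys y : evalL gs l ys -> evalR f ys y -> evalR (RComp f gs) l y
| ePrec0 f g l y : evalR f l y -> evalR (RPrec f g) (0 :: l) y
| ePrecS f g x l r y : evalR (RPrec f g) (x :: l) r ->
    evalR g (x :: r :: l) y -> evalR (RPrec f g) (x.+1 :: l) y
| eMin f l y : evalR f (y :: l) 0 ->
    (forall z, z < y -> exists w, w <> 0 /\ evalR f (z :: l) w) ->
    evalR (RMin f) l y
with evalL : list recf -> seq nat -> seq nat -> Prop :=
| eNil l : evalL nil l [::]
| eCons g gs l y ys : evalR g l y -> evalL gs l ys -> evalL (cons g gs) l (y :: ys).

Definition computable_nat (alpha : nat -> nat) : Prop :=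
  exists e : recf, forall x, evalR e [:: x] (alpha x).

(** [eta alpha p q]: the partial function with associate alpha maps p to q:
    q(n) = alpha(<n, p[k]>) - 1 for the least k with alpha(<n, p[k]>) > 0. *)
Definition eta (alpha : nat -> nat) (p q : Baire) : Prop :=
  forall n, exists k,
    0 < alpha (cpair n (code_seq (prefix p k))) /\
    (forall j, j < k -> alpha (cpair n (code_seq (prefix p j))) = 0) /\
    q n = (alpha (cpair n (code_seq (prefix p k)))).-1.

Record RepSpace : Type := {
  carrier :> Type;
  delta : Baire -> carrier -> Prop;
  delta_fun : forall p x y, delta p x -> delta p y -> x = y;
  delta_surj : forall x, exists p, delta p x
}.

(** partial multivalued f :⊆ X ⇉ Y, given as a relation; dom f = {x | ∃y, f x y} *)
Definition mvf (X Y : RepSpace) := X -> Y -> Prop.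

Definition realizer (X Y : RepSpace) (f : mvf X Y) (G : Baire -> option Baire) :=
  forall p x, delta p x -> (exists y, f x y) ->
    exists q, G p = Some q /\ exists y, delta q y /\ f x y.

(** Weihrauch reducibility f <=W g, with K := eta alpha, H := eta beta *)
Definition W_le (X Y U V : RepSpace) (f : mvf X Y) (g : mvf U V) : Prop :=
  exists alpha beta : nat -> nat,
    computable_nat alpha /\ computable_nat beta /\
    forall G, realizer g G ->
      forall p x, delta p x -> (exists y, f x y) ->
        exists h q r, eta beta p h /\ G h = Some q /\ eta alpha (pairB p q) r /\
          exists y, delta r y /\ f x y.

Definition W_eq (X Y U V : RepSpace) (f : mvf X Y) (g : mvf U V) : Prop :=
  W_le f g /\ W_le g f.

Definition mv_comp (X Y Z : RepSpace) (f : mvf Y Z) (g : mvf X Y) : mvf X Z :=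
  fun x z => (forall y, g x y -> exists z', f y z') /\ exists y, g x y /\ f y z.

Definition is_comp_product (X Y U V C D : RepSpace)
    (f : mvf X Y) (g : mvf U V) (h : mvf C D) : Prop :=
  (forall (X' Y' Z' : RepSpace) (f' : mvf Y' Z') (g' : mvf X' Y'),
      W_le f' f -> W_le g' g -> W_le (mv_comp f' g') h) /\
  (forall (C' D' : RepSpace) (k : mvf C' D'),
      (forall (X' Y' Z' : RepSpace) (f' : mvf Y' Z') (g' : mvf X' Y'),
          W_le f' f -> W_le g' g -> W_le (mv_comp f' g') k) ->
      W_le h k).

(** The discrete space {1,...,n}: the element i : 'I_n stands for the number
    i+1; a name p of k ∈ {1..n} is any p with p(0) = k. *)
Lemma finsp_fun n (p : Baire) (x y : 'I_n) : p 0 = x.+1 -> p 0 = y.+1 -> x = y.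
Proof. by move=> -> [] /val_inj. Qed.

Lemma finsp_surj n (x : 'I_n) : exists p : Baire, p 0 = x.+1.
Proof. by exists (fun _ => x.+1). Qed.

Definition FinSpace (n : nat) : RepSpace :=
  {| carrier := 'I_n; delta := fun p (x : 'I_n) => p 0 = x.+1;
     delta_fun := @finsp_fun n; delta_surj := @finsp_surj n |}.

(** subsets A of {1,...,n}, named by an enumeration p of the complement
    {1..n} \ A (the values of p outside {1..n}, e.g. 0, are ignored). *)
Definition subset_name n (p : Baire) (A : {set 'I_n}) : Prop :=
  forall i : 'I_n, i \in A <-> ~ (exists j, p j = i.+1).

Lemma subsp_fun n p (A B : {set 'I_n}) :
  subset_name p A -> subset_name p B -> A = B.
Proof.
move=> hA hB; apply/setP=> i.
case: (boolP (i \in A)) => iA; case: (boolP (i \in B)) => iB //.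
- by move/hA: iA => /hB; rewrite (negbTE iB).
- by move/hB: iB => /hA; rewrite (negbTE iA).
Qed.

Lemma subsp_surj n (A : {set 'I_n}) : exists p, subset_name p A.
Proof.
exists (fun j => if [exists i : 'I_n, (i.+1 == j) && (i \notin A)] then j else 0).
move=> i; split.
- move=> iA [j]; case: ifP => [/existsP [i' /andP [/eqP Hi' nA]] Hj|_ Hj //].
  move: Hj; rewrite -Hi' => -[] /val_inj Hi; subst i'.
  by rewrite iA in nA.
- move=> H; apply/negPn/negP=> nA; apply: H; exists i.+1.
  case: ifP => // /negbT /existsPn /(_ i).
  by rewrite eqxx nA.
Qed.

Definition SubsetSpace (n : nat) : RepSpace :=
  {| carrier := {set 'I_n}; delta := @subset_name n;
     delta_fun := @subsp_fun n; delta_surj := @subsp_surj n |}.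

(** C_{1..n} : ⊆ A(1..n) ⇉ {1..n}, A ↦ A, defined on non-empty A *)
Definition C_fin (n : nat) : mvf (SubsetSpace n) (FinSpace n) :=
  fun (A : {set 'I_n}) (i : 'I_n) => i \in A.
Arguments C_fin n _ _ : clear implicits.

Definition openB (A : Baire -> Prop) : Prop :=
  forall p, A p -> exists n, forall q, (forall i, i < n -> q i = p i) -> A q.
Definition clopenB (A : Baire -> Prop) : Prop :=
  openB A /\ openB (fun p => ~ A p).

Section Restrict.
Variables (X : RepSpace) (A : Baire -> Prop).

Definition restr_carrier := {x : X | exists p, A p /\ delta p x}.
Definition restr_delta (p : Baire) (x : restr_carrier) : Prop :=
  A p /\ delta p (proj1_sig x).

Lemma restr_fun p x y : restr_delta p x -> restr_delta p y -> x = y.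
Proof.
case: x y => [x hx] [y hy] /= [_ dx] [_ dy].
apply: eq_sig_hprop => [z a b|/=]; first exact: proof_irrelevance.
exact: delta_fun dx dy.
Qed.

Lemma restr_surj x : exists p, restr_delta p x.
Proof. by case: x => [x [p [Ap dp]]]; exists p. Qed.

Definition RestrSpace : RepSpace :=
  {| carrier := restr_carrier; delta := restr_delta;
     delta_fun := restr_fun; delta_surj := restr_surj |}.
End Restrict.

Definition restr_mvf (X Y : RepSpace) (g : mvf X Y) (A : Baire -> Prop)
  : mvf (RestrSpace X A) Y := fun x y => g (proj1_sig x) y.
Arguments restr_mvf {X Y} g A _ _.

Lemma unit_fun (p : Baire) (x y : unit) : True -> True -> x = y.
Proof. by case: x; case: y. Qed.
Lemma unit_surj (x : unit) : exists p : Baire, True.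
Proof. by exists (fun _ => 0). Qed.
Definition UnitSpace : RepSpace :=
  {| carrier := unit; delta := fun _ _ => True;
     delta_fun := unit_fun; delta_surj := unit_surj |}.

Definition nowhere : mvf UnitSpace UnitSpace := fun _ _ => False.

Definition fractal (X Y : RepSpace) (f : mvf X Y) : Prop :=
  exists (U V : RepSpace) (g : mvf U V),
    (exists u : U, True) /\
    (forall u : U, exists v, g u v) /\
    forall A : Baire -> Prop, clopenB A ->
      W_eq (restr_mvf g A) f \/ W_eq (restr_mvf g A) nowhere.

From Pilot Require Import Defs.
From mathcomp Require Import all_boot zify.
From Stdlib Require Import ClassicalEpsilon FunctionalExtensionality.

Set Implicit Arguments.
Unset Strict Implicit.
Unset Printing Implicit Defensive.

(* Let g0 be the total witness of the fractal f. On every clopen set of names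
   containing a name, g0 is equivalent to f (the alternative 0 is impossible for
   a total problem), so g0 <=W f <=W g * C_{1..n} <=W [star_fin n g], a concrete
   problem whose instances consist of a name of a non-empty A in {1..n}, given
   by enumerating its complement, and of an instance of g for every choice in A.
   Along a reduction of g0 to [star_fin n g], the number of choices excluded
   after finitely many steps is at most n; fix a name where it is maximal. On
   the cylinder that fixes the input used for those steps no further choice is
   ever excluded, so all instances there name the same set, and an admissible
   choice can be made in advance. This reduces g0 restricted to that cylinder,
   which is equivalent to f, to g. *)

(** * Primitive recursive expressions *)

Inductive pexpr : Type :=
| EVar (i : nat) | EZero | ESucc (e : pexpr) | EFun (f : nat -> nat) (e : pexpr)
| EApp1 (F a : pexpr) | EApp2 (F a b : pexpr) | EApp3 (F a b c : pexpr)
| ERec (b s e : pexpr).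

Fixpoint prim_rec (b : nat) (st : nat -> nat -> nat) (m : nat) : nat :=
  match m with 0 => b | m'.+1 => st m' (prim_rec b st m') end.

Fixpoint eval_expr (e : pexpr) (env : seq nat) : nat :=
  match e with
  | EVar i => nth 0 env i
  | EZero => 0
  | ESucc e => (eval_expr e env).+1
  | EFun f e => f (eval_expr e env)
  | EApp1 F a => eval_expr F [:: eval_expr a env]
  | EApp2 F a b => eval_expr F [:: eval_expr a env; eval_expr b env]
  | EApp3 F a b c => eval_expr F [:: eval_expr a env; eval_expr b env; eval_expr c env]
  | ERec b s e =>
      prim_rec (eval_expr b env) (fun j acc => eval_expr s [:: j, acc & env]) (eval_expr e env)
  end.

Fixpoint computable_expr (e : pexpr) : Prop :=
  match e with
  | EVar _ | EZero => True
  | ESucc e => computable_expr e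
  | EFun f e => computable_nat f /\ computable_expr e
  | EApp1 F a => computable_expr F /\ computable_expr a
  | EApp2 F a b => computable_expr F /\ computable_expr a /\ computable_expr b
  | EApp3 F a b c =>
      computable_expr F /\ computable_expr a /\ computable_expr b /\ computable_expr c
  | ERec b s e => computable_expr b /\ computable_expr s /\ computable_expr e
  end.

Fixpoint var_bound (e : pexpr) : nat :=
  match e with
  | EVar i => i.+1
  | EZero => 0
  | ESucc e => var_bound e
  | EFun _ e => var_bound e
  | EApp1 _ a => var_bound a
  | EApp2 _ a b => maxn (var_bound a) (var_bound b)
  | EApp3 _ a b c => maxn (var_bound a) (maxn (var_bound b) (var_bound c))
  | ERec b s e => maxn (var_bound b) (maxn (var_bound s - 2) (var_bound e))
  end.

Lemma prim_rec_ext b f g m :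
  (forall j acc, f j acc = g j acc) -> prim_rec b f m = prim_rec b g m.
Proof. by move=> H; elim: m => //= m ->. Qed.

Lemma eval_expr_agree e env env' :
  (forall i, i < var_bound e -> nth 0 env i = nth 0 env' i) ->
  eval_expr e env = eval_expr e env'.
Proof.
elim: e env env' => [i|| e IH | f e IH | F _ a IHa | F _ a IHa b IHb | F _ a IHa b IHb c IHc
  | b IHb s IHs e IHe] env env' H /=.
- exact: H.
- by [].
- by rewrite (IH _ env').
- by rewrite (IH _ env').
- by rewrite (IHa _ env').
- by rewrite (IHa _ env') ?(IHb _ env') // => i Hi; apply: H; rewrite leq_max Hi ?orbT.
- rewrite (IHa _ env') ?(IHb _ env') ?(IHc _ env') // => i Hi; apply: H;
    rewrite !leq_max Hi ?orbT //.
- rewrite (IHe _ env'); last by move=> i Hi; apply: H; rewrite !leq_max Hi ?orbT.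
  rewrite (IHb _ env'); last by move=> i Hi; apply: H; rewrite !leq_max Hi ?orbT.
  apply: prim_rec_ext => j acc; apply: IHs => -[|[|i]] //= Hi; apply: H.
  rewrite /= !leq_max; apply/orP; right; apply/orP; left; lia.
Qed.

Lemma evalL_projs env s : evalL (map RProj s) env (map (nth 0 env) s).
Proof. by elim: s => [|i s IH] /=; constructor => //; constructor. Qed.

Lemma nth_projs env N i : i < N -> nth 0 (map (nth 0 env) (iota 0 N)) i = nth 0 env i.
Proof. by move=> H; rewrite (nth_map 0) ?size_iota // nth_iota. Qed.

Lemma compile_expr e : computable_expr e -> exists r, forall env, evalR r env (eval_expr e env).
Proof.
elim: e => [i|| e IH | f e IH | F IF a IHa | F IF a IHa b IHb | F IF a IHa b IHb c IHc
  | b IHb s IHs e IHe] /=.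
- by exists (RProj i) => env; constructor.
- by exists RZero => env; constructor.
- move=> /IH [r Hr]; exists (RComp RSucc [:: r]) => env.
  apply: (eComp (ys := [:: eval_expr e env])); first by repeat constructor.
  exact: (eSucc [:: eval_expr e env]).
- move=> [[rf Hf] /IH [r Hr]]; exists (RComp rf [:: r]) => env.
  apply: (eComp (ys := [:: eval_expr e env])); first by repeat constructor.
  exact: Hf.
- move=> [/IF [rF HF] /IHa [ra Ha]]; exists (RComp rF [:: ra]) => env.
  by apply: (eComp (ys := [:: eval_expr a env])); first by repeat constructor.
- move=> [/IF [rF HF] [/IHa [ra Ha] /IHb [rb Hb]]]; exists (RComp rF [:: ra; rb]) => env.
  by apply: (eComp (ys := [:: eval_expr a env; eval_expr b env])); first by repeat constructor.
- move=> [/IF [rF HF] [/IHa [ra Ha] [/IHb [rb Hb] /IHc [rc Hc]]]].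
  exists (RComp rF [:: ra; rb; rc]) => env.
  apply: (eComp (ys := [:: eval_expr a env; eval_expr b env; eval_expr c env])) => //.
  by repeat constructor.
- (* [RPrec] recurses on its first argument, so the environment is passed on
     explicitly through its first [N] projections. *)
  move=> [/IHb [rb Hb] [/IHs [rs Hs] /IHe [re He]]].
  set N := maxn (var_bound b) (var_bound s - 2).
  exists (RComp (RPrec rb rs) (re :: map RProj (iota 0 N))) => env.
  set l := map (nth 0 env) (iota 0 N).
  apply: (eComp (ys := eval_expr e env :: l)).
    by constructor => //; exact: evalL_projs.
  elim: (eval_expr e env) => [|m IH] /=.
  + apply: ePrec0; have -> : eval_expr b env = eval_expr b l.
      by apply: eval_expr_agree => i Hi; rewrite nth_projs //; rewrite leq_max Hi.
    exact: Hb.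
  + apply: ePrecS IH _.
    set it := prim_rec _ _ m.
    have -> : eval_expr s [:: m, it & env] = eval_expr s [:: m, it & l].
      apply: eval_expr_agree.
      move=> [|[|i]] //= Hi; rewrite nth_projs //; rewrite leq_max; apply/orP; right; lia.
    exact: Hs.
Qed.

Lemma compile_unary e : computable_expr e -> computable_nat (fun x => eval_expr e [:: x]).
Proof. by move=> /compile_expr [r Hr]; exists r. Qed.

Fixpoint constE (c : nat) : pexpr := if c is c'.+1 then ESucc (constE c') else EZero.

Lemma constE_eval c env : eval_expr (constE c) env = c.
Proof. by elim: c => //= c ->. Qed.

Lemma computable_const c : computable_nat (fun _ => c).
Proof.
have [|r Hr] := @compile_unary (constE c); first by elim: c.
by exists r => x; move: (Hr x); rewrite constE_eval.
Qed.

(** * Arithmetic, Cantor pairing and coded sequences *)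

Definition predE := ERec EZero (EVar 0) (EVar 0).
Lemma predE_eval x : eval_expr predE [:: x] = x.-1. Proof. by case: x. Qed.
Lemma predE_ok : computable_expr predE. Proof. done. Qed.
#[global] Hint Resolve predE_ok : computable.
#[global] Opaque predE.

Definition addE := ERec (EVar 0) (ESucc (EVar 1)) (EVar 1).
Lemma addE_eval x y : eval_expr addE [:: x; y] = x + y.
Proof. rewrite /=; elim: y => [|y IH] /=; [by rewrite addn0 | by rewrite IH addnS]. Qed.
Lemma addE_ok : computable_expr addE. Proof. done. Qed.
#[global] Hint Resolve addE_ok : computable.
#[global] Opaque addE.

Definition subE := ERec (EVar 0) (EApp1 predE (EVar 1)) (EVar 1).
Lemma subE_eval x y : eval_expr subE [:: x; y] = x - y.
Proof. rewrite /=; elim: y => [|y IH] /=; [by rewrite subn0 | by rewrite predE_eval IH subnS]. Qed.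
Lemma subE_ok : computable_expr subE. Proof. done. Qed.
#[global] Hint Resolve subE_ok : computable.
#[global] Opaque subE.

Definition mulE := ERec EZero (EApp2 addE (EVar 1) (EVar 2)) (EVar 1).
Lemma mulE_eval x y : eval_expr mulE [:: x; y] = x * y.
Proof.
by rewrite /=; elim: y => [|y IH] /=; rewrite ?muln0 // addE_eval IH mulnS addnC.
Qed.
Lemma mulE_ok : computable_expr mulE. Proof. done. Qed.
#[global] Hint Resolve mulE_ok : computable.
#[global] Opaque mulE.

Definition ifzE := ERec (EVar 1) (EVar 4) (EVar 0).
Lemma ifzE_eval c a b : eval_expr ifzE [:: c; a; b] = if c == 0 then a else b.
Proof. by case: c. Qed.
Lemma ifzE_ok : computable_expr ifzE. Proof. done. Qed.
#[global] Hint Resolve ifzE_ok : computable.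
#[global] Opaque ifzE.

Definition lebE := EApp3 ifzE (EApp2 subE (EVar 0) (EVar 1)) (ESucc EZero) EZero.
Lemma lebE_eval x y : eval_expr lebE [:: x; y] = (x <= y).
Proof. by rewrite /= subE_eval ifzE_eval subn_eq0; case: (x <= y). Qed.
Lemma lebE_ok : computable_expr lebE. Proof. done. Qed.
#[global] Hint Resolve lebE_ok : computable.
#[global] Opaque lebE.

Definition ltbE := EApp2 lebE (ESucc (EVar 0)) (EVar 1).
Lemma ltbE_eval x y : eval_expr ltbE [:: x; y] = (x < y).
Proof. by rewrite /= lebE_eval. Qed.
Lemma ltbE_ok : computable_expr ltbE. Proof. done. Qed.
#[global] Hint Resolve ltbE_ok : computable.
#[global] Opaque ltbE.

Definition dblE := EApp2 addE (EVar 0) (EVar 0).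
Lemma dblE_eval x : eval_expr dblE [:: x] = x.*2.
Proof. by rewrite /= addE_eval addnn. Qed.
Lemma dblE_ok : computable_expr dblE. Proof. done. Qed.
#[global] Hint Resolve dblE_ok : computable.
#[global] Opaque dblE.

Definition halfE :=
  ERec EZero (EApp2 addE (EVar 1) (EApp2 lebE (EApp1 dblE (ESucc (EVar 0))) (EVar 2))) (EVar 0).
Lemma halfE_eval x : eval_expr halfE [:: x] = x./2.
Proof.
rewrite /=; set step := fun _ _ => _.
have partial m : prim_rec 0 step m = minn m x./2.
  elim: m => [|m IH] /=; first by rewrite min0n.
  rewrite /step addE_eval lebE_eval dblE_eval IH -geq_half_double.
  by case: (leqP m.+1 x./2) => h /=; lia.
by rewrite partial; apply/minn_idPr; rewrite -{2}(odd_double_half x); lia.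
Qed.
Lemma halfE_ok : computable_expr halfE. Proof. done. Qed.
#[global] Hint Resolve halfE_ok : computable.
#[global] Opaque halfE.

Definition tri t := (t * t.+1)./2.
Lemma triS t : tri t.+1 = tri t + t.+1.
Proof.
rewrite /tri; have -> : t.+1 * t.+2 = t * t.+1 + (t.+1).*2 by rewrite -!mul2n !mulSn !mulnS; lia.
by rewrite halfD odd_double andbF doubleK.
Qed.
Lemma tri_mono s t : s <= t -> tri s <= tri t.
Proof.
elim: t => [|t IH]; first by rewrite leqn0 => /eqP->.
by rewrite leq_eqVlt ltnS => /orP[/eqP->//|/IH h]; rewrite triS; lia.
Qed.
Lemma tri_ge t : t <= tri t.
Proof. elim: t => // t IH; rewrite triS; lia. Qed.
Lemma cpair_tri a b : cpair a b = tri (a + b) + b.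
Proof. by rewrite /cpair divn2. Qed.

Definition triE := EApp1 halfE (EApp2 mulE (EVar 0) (ESucc (EVar 0))).
Lemma triE_eval t : eval_expr triE [:: t] = tri t.
Proof. by rewrite /= mulE_eval halfE_eval. Qed.
Lemma triE_ok : computable_expr triE. Proof. done. Qed.
#[global] Hint Resolve triE_ok : computable.
#[global] Opaque tri.
#[global] Opaque triE.

Definition cpairE := EApp2 addE (EApp1 triE (EApp2 addE (EVar 0) (EVar 1))) (EVar 1).
Lemma cpairE_eval a b : eval_expr cpairE [:: a; b] = cpair a b.
Proof. by rewrite /= addE_eval triE_eval addE_eval cpair_tri. Qed.
Lemma cpairE_ok : computable_expr cpairE. Proof. done. Qed.
#[global] Hint Resolve cpairE_ok : computable.
#[global] Opaque cpairE.

Definition diagE :=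
  ERec EZero (EApp2 addE (EVar 1) (EApp2 lebE (EApp1 triE (ESucc (EVar 0))) (EVar 2))) (EVar 0).
Definition diag_index x := prim_rec 0 (fun j acc => acc + (tri j.+1 <= x)) x.
Lemma diagE_eval x : eval_expr diagE [:: x] = diag_index x.
Proof.
by rewrite /= /diag_index; apply: prim_rec_ext => j acc; rewrite addE_eval lebE_eval triE_eval.
Qed.
Lemma diagE_ok : computable_expr diagE. Proof. done. Qed.
#[global] Hint Resolve diagE_ok : computable.
#[global] Opaque diagE.

Lemma tri_le_cpair a b s : (tri s <= cpair a b) = (s <= a + b).
Proof.
rewrite cpair_tri; case: (leqP s (a + b)) => h.
- by have := tri_mono h; lia.
- have := tri_mono h; rewrite triS; lia.
Qed.

Lemma diag_index_cpair a b : diag_index (cpair a b) = a + b.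
Proof.
rewrite /diag_index; set step := fun _ _ => _.
have partial m : prim_rec 0 step m = minn m (a + b).
  elim: m => [|m IH] /=; first by rewrite min0n.
  by rewrite /step IH tri_le_cpair; case: (leqP m.+1 (a + b)) => h /=; lia.
by rewrite partial; apply/minn_idPr; rewrite cpair_tri; have := tri_ge (a + b); lia.
Qed.

Definition unpair2E := EApp2 subE (EVar 0) (EApp1 triE (EApp1 diagE (EVar 0))).
Definition unpair2 x := x - tri (diag_index x).
Lemma unpair2E_eval x : eval_expr unpair2E [:: x] = unpair2 x.
Proof. by rewrite /= subE_eval triE_eval diagE_eval. Qed.
Lemma unpair2E_ok : computable_expr unpair2E. Proof. done. Qed.
#[global] Hint Resolve unpair2E_ok : computable.
#[global] Opaque unpair2E.
Definition unpair1E := EApp2 subE (EApp1 diagE (EVar 0)) (EApp1 unpair2E (EVar 0)).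
Definition unpair1 x := diag_index x - unpair2 x.
Lemma unpair1E_eval x : eval_expr unpair1E [:: x] = unpair1 x.
Proof. by rewrite /= subE_eval diagE_eval unpair2E_eval. Qed.
Lemma unpair1E_ok : computable_expr unpair1E. Proof. done. Qed.
#[global] Hint Resolve unpair1E_ok : computable.
#[global] Opaque unpair1E.

Lemma unpair2_cpair a b : unpair2 (cpair a b) = b.
Proof. by rewrite /unpair2 diag_index_cpair cpair_tri addKn. Qed.
Lemma unpair1_cpair a b : unpair1 (cpair a b) = a.
Proof. by rewrite /unpair1 unpair2_cpair diag_index_cpair addnK. Qed.

Lemma leq_cpair2 a b : b <= cpair a b.
Proof. rewrite cpair_tri; lia. Qed.

Definition tailE := EApp1 unpair2E (EApp1 predE (EVar 0)).
Definition code_tail c := unpair2 c.-1.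
Lemma tailE_eval c : eval_expr tailE [:: c] = code_tail c.
Proof. by rewrite /= predE_eval unpair2E_eval. Qed.
Lemma tailE_ok : computable_expr tailE. Proof. done. Qed.
#[global] Hint Resolve tailE_ok : computable.
#[global] Opaque tailE.
Definition headE := EApp1 unpair1E (EApp1 predE (EVar 0)).
Definition code_head c := unpair1 c.-1.
Lemma headE_eval c : eval_expr headE [:: c] = code_head c.
Proof. by rewrite /= predE_eval unpair1E_eval. Qed.
Lemma headE_ok : computable_expr headE. Proof. done. Qed.
#[global] Hint Resolve headE_ok : computable.
#[global] Opaque headE.

Lemma unpair2_0 : unpair2 0 = 0. Proof. by rewrite /unpair2. Qed.
Lemma unpair1_0 : unpair1 0 = 0. Proof. by rewrite /unpair1 unpair2_0. Qed.

Lemma code_tail_seq s : code_tail (code_seq s) = code_seq (behead s).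
Proof. by case: s => [|x s] /=; rewrite /code_tail /= ?unpair2_0 ?unpair2_cpair. Qed.
Lemma code_head_seq s : code_head (code_seq s) = head 0 s.
Proof. by case: s => [|x s] /=; rewrite /code_head /= ?unpair1_0 ?unpair1_cpair. Qed.

Definition consE := ESucc (EApp2 cpairE (EVar 0) (EVar 1)).
Lemma consE_eval x c : eval_expr consE [:: x; c] = (cpair x c).+1.
Proof. by rewrite /= cpairE_eval. Qed.
Lemma consE_ok : computable_expr consE. Proof. done. Qed.
#[global] Hint Resolve consE_ok : computable.
#[global] Opaque consE.

Definition dropE := ERec (EVar 1) (EApp1 tailE (EVar 1)) (EVar 0).
Lemma dropE_eval i s : eval_expr dropE [:: i; code_seq s] = code_seq (drop i s).
Proof.
rewrite /=; elim: i => [|i IH] /=; first by rewrite drop0.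
by rewrite tailE_eval IH code_tail_seq -drop1 drop_drop add1n.
Qed.
Lemma dropE_ok : computable_expr dropE. Proof. done. Qed.
#[global] Hint Resolve dropE_ok : computable.
#[global] Opaque dropE.

Definition nthE := EApp1 headE (EApp2 dropE (EVar 0) (EVar 1)).
Lemma nthE_eval i s : eval_expr nthE [:: i; code_seq s] = nth 0 s i.
Proof. by rewrite /= dropE_eval headE_eval code_head_seq -nth0 nth_drop addn0. Qed.
Lemma nthE_ok : computable_expr nthE. Proof. done. Qed.
#[global] Hint Resolve nthE_ok : computable.
#[global] Opaque nthE.

Lemma size_le_code_seq s : size s <= code_seq s.
Proof. elim: s => //= x s IH; have := leq_cpair2 x (code_seq s); lia. Qed.
Lemma code_seq_eq0 s : (code_seq s == 0) = (s == [::]).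
Proof. by case: s. Qed.

Definition sizeE :=
  ERec EZero (EApp2 addE (EVar 1) (EApp2 ltbE EZero (EApp2 dropE (EVar 0) (EVar 2)))) (EVar 0).
Lemma sizeE_eval s : eval_expr sizeE [:: code_seq s] = size s.
Proof.
rewrite /=; set step := fun _ _ => _.
have partial m : prim_rec 0 step m = minn m (size s).
  elim: m => [|m IH] /=; first by rewrite min0n.
  rewrite /step addE_eval ltbE_eval dropE_eval IH lt0n code_seq_eq0 -size_eq0 size_drop.
  by rewrite subn_eq0; case: (leqP (size s) m) => h /=; lia.
by rewrite partial; apply/minn_idPr; apply: size_le_code_seq.
Qed.
Lemma sizeE_ok : computable_expr sizeE. Proof. done. Qed.
#[global] Hint Resolve sizeE_ok : computable.
#[global] Opaque sizeE.

Definition tabE (F : pexpr) :=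
  ERec EZero (EApp2 consE (EApp2 F (EApp2 subE (EVar 2) (ESucc (EVar 0))) (EVar 3)) (EVar 1))
    (EVar 0).
Lemma tabE_eval F m q :
  eval_expr (tabE F) [:: m; q] = code_seq (map (fun i => eval_expr F [:: i; q]) (iota 0 m)).
Proof.
rewrite /=; set step := fun _ _ => _.
have partial j : j <= m ->
    prim_rec 0 step j = code_seq (map (fun i => eval_expr F [:: i; q]) (iota (m - j) j)).
  elim: j => [|j IH] hj //=; rewrite IH; last lia.
  by rewrite /step consE_eval subE_eval; have -> : m - j = (m - j.+1).+1 by lia.
by rewrite partial // subnn.
Qed.
Lemma tabE_ok F : computable_expr F -> computable_expr (tabE F).
Proof. by move=> h; rewrite /=; repeat split; auto with computable. Qed.
#[global] Opaque tabE.
#[global] Hint Resolve tabE_ok : computable.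

(** * Simulating associates *)

Definition code_prefix (x : Baire) K := code_seq (Defs.prefix x K).

Lemma size_prefix p k : size (Defs.prefix p k) = k.
Proof. by rewrite /Defs.prefix size_map size_iota. Qed.

Lemma nth_prefix p k m : m < k -> nth 0 (Defs.prefix p k) m = p m.
Proof. by move=> h; rewrite /Defs.prefix (nth_map 0) ?size_iota // nth_iota. Qed.

Lemma sizeE_prefix p j : eval_expr sizeE [:: code_prefix p j] = j.
Proof. by rewrite sizeE_eval size_prefix. Qed.

Definition approximates (Phi : pexpr) (p q : Baire) :=
  (forall n j, eval_expr Phi [:: n; code_prefix p j] = 0 \/
               eval_expr Phi [:: n; code_prefix p j] = (q n).+1) /\
  (forall n, exists J, forall j, J <= j -> eval_expr Phi [:: n; code_prefix p j] = (q n).+1).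

Lemma eventually_forall_below (P : nat -> nat -> Prop) :
  (forall m, exists J, forall j, J <= j -> P m j) ->
  forall K, exists J, forall j, J <= j -> forall m, m < K -> P m j.
Proof.
move=> H; elim=> [|K [J HJ]]; first by exists 0.
case: (H K) => J' HJ'; exists (maxn J J') => j hj m hm.
case: (ltngtP m K) => h.
- by apply: HJ => //; lia.
- lia.
- by subst m; apply: HJ'; lia.
Qed.

(* [runE X L] evaluates, on the prefix coded by its second argument, the
   associate approximated by [L] on the sequence approximated by [X]: stage [K]
   of the search asks [L] for [a <n, x[K]>]. The state is [0] while searching,
   [1] once a needed value of [X] or [L] is not yet available (final answer
   [0]), and [a <n, x[K]> + 1 = y n + 2] once the search succeeds. *)
Definition predXE (X : pexpr) := EApp1 predE (EApp2 X (EVar 0) (EVar 1)).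
Definition probeE (X L : pexpr) :=
  EApp2 L (EApp2 cpairE (EVar 2) (EApp2 (tabE (predXE X)) (EVar 0) (EVar 3))) (EVar 3).
Definition answerE (X L : pexpr) :=
  EApp3 ifzE (probeE X L) (ESucc EZero) (EApp3 ifzE (EApp1 predE (probeE X L)) EZero (probeE X L)).
Definition stepE (X L : pexpr) :=
  EApp3 ifzE (EVar 1)
    (EApp3 ifzE (EVar 0) (answerE X L)
       (EApp3 ifzE (EApp2 X (EApp1 predE (EVar 0)) (EVar 3)) (ESucc EZero) (answerE X L)))
    (EVar 1).
Definition runE (X L : pexpr) :=
  EApp1 predE (ERec EZero (stepE X L) (ESucc (EApp1 sizeE (EVar 1)))).

Lemma runE_ok X L : computable_expr X -> computable_expr L -> computable_expr (runE X L).
Proof. by move=> *; rewrite /=; repeat split; auto with computable. Qed.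
#[global] Hint Resolve runE_ok : computable.

Section RunSemantics.
Variables (X L : pexpr) (n q : nat).

Definition run_code K := code_seq (map (fun i => (eval_expr X [:: i; q]).-1) (iota 0 K)).
Definition run_probe K := eval_expr L [:: cpair n (run_code K); q].
Definition run_answer K :=
  if run_probe K == 0 then 1 else if (run_probe K).-1 == 0 then 0 else run_probe K.
Definition run_step K st :=
  if st == 0 then
    if K == 0 then run_answer K
    else if eval_expr X [:: K.-1; q] == 0 then 1 else run_answer K
  else st.

Lemma runE_eval :
  eval_expr (runE X L) [:: n; q] = (prim_rec 0 run_step (eval_expr sizeE [:: q]).+1).-1.
Proof.
change (eval_expr (runE X L) [:: n; q]) with (eval_expr predE
  [:: prim_rec 0 (fun j acc => eval_expr (stepE X L) [:: j, acc, n & [:: q]])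
        (eval_expr sizeE [:: q]).+1]).
rewrite predE_eval; congr (_.-1); apply: prim_rec_ext => K st.
rewrite /run_step /run_answer /run_probe /run_code /= !ifzE_eval !predE_eval !cpairE_eval.
by rewrite !tabE_eval /=; under eq_map => i do rewrite predE_eval.
Qed.

Lemma run_step_final K st : st != 0 -> run_step K st = st.
Proof. by rewrite /run_step => /negbTE ->. Qed.

End RunSemantics.

Lemma prim_rec_stable f b K K' : (forall K st, st != 0 -> f K st = st) ->
  prim_rec b f K != 0 -> K <= K' -> prim_rec b f K' = prim_rec b f K.
Proof.
move=> Hf Hnz; elim: K' => [|K' IH]; first by rewrite leqn0 => /eqP ->.
rewrite leq_eqVlt => /orP [/eqP -> //| ]; rewrite ltnS => /IH {}IH /=.
by rewrite IH Hf // -IH.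
Qed.

Section RunCorrect.
Variables (X L : pexpr) (n q : nat) (a : nat -> nat) (x : Baire).
Hypothesis HX : forall m, eval_expr X [:: m; q] = 0 \/ eval_expr X [:: m; q] = (x m).+1.
Hypothesis HL : forall i, eval_expr L [:: i; q] = 0 \/ eval_expr L [:: i; q] = (a i).+1.
Variable k : nat.
Hypothesis Hk : 0 < a (cpair n (code_prefix x k)).
Hypothesis Hlt : forall j, j < k -> a (cpair n (code_prefix x j)) = 0.

Lemma run_code_prefix K : (forall m, m < K -> eval_expr X [:: m; q] <> 0) ->
  run_code X q K = code_prefix x K.
Proof.
move=> H; rewrite /run_code /code_prefix /Defs.prefix; congr code_seq; apply/eq_in_map => i.
rewrite mem_iota add0n => /H; by case: (HX i) => ->.
Qed.

Lemma run_answer_cases K : K <= k -> (forall m, m < K -> eval_expr X [:: m; q] <> 0) ->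
  (run_answer X L n q K = 0 /\ K < k) \/ run_answer X L n q K = 1 \/
  run_answer X L n q K = (a (cpair n (code_prefix x k))).+1.
Proof.
move=> Kk HXm; rewrite /run_answer /run_probe run_code_prefix //.
case: (HL (cpair n (code_prefix x K))) => ->; first by right; left.
rewrite /=; case: (ltngtP K k) => hK.
- by rewrite Hlt //=; left.
- lia.
- by subst K; move: Hk; case: (a _) => // v _ /=; right; right.
Qed.

Lemma run_invariant K : let st := prim_rec 0 (run_step X L n q) K in
  (st = 0 /\ K <= k /\ forall m, m.+1 < K -> eval_expr X [:: m; q] <> 0) \/ st = 1 \/
  st = (a (cpair n (code_prefix x k))).+1.
Proof.
elim: K => [|K IH] /=; first by left.
case: IH => [[-> [Kk HXK]] | [-> | ->]]; last 2 first.
- by right; left; rewrite run_step_final.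
- by right; right; rewrite run_step_final.
have answer : (forall m, m < K -> eval_expr X [:: m; q] <> 0) ->
  (run_answer X L n q K = 0 /\ K.+1 <= k /\
   forall m, m.+1 < K.+1 -> eval_expr X [:: m; q] <> 0) \/
  run_answer X L n q K = 1 \/ run_answer X L n q K = (a (cpair n (code_prefix x k))).+1.
  by move=> HXm; case: (run_answer_cases Kk HXm) => [[-> hK]|]; [left | right].
rewrite /run_step eqxx; case: (K =P 0) => [K0|/eqP K0].
- by subst K; apply: answer => m; lia.
- case: (eval_expr X [:: K.-1; q] =P 0) => [_|/eqP XK]; first by right; left.
  apply: answer => m hm; case: (ltngtP m.+1 K) => h.
  + exact: HXK.
  + lia.
  + by move: XK; rewrite -h /= => /eqP.
Qed.

Lemma run_sound : eval_expr (runE X L) [:: n; q] = 0 \/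
  eval_expr (runE X L) [:: n; q] = a (cpair n (code_prefix x k)).
Proof.
rewrite runE_eval.
by case: (run_invariant (eval_expr sizeE [:: q]).+1) => [[-> _]|[->|->]]; [left|left|right].
Qed.

Lemma run_complete : k <= eval_expr sizeE [:: q] ->
  (forall m, m < k -> eval_expr X [:: m; q] <> 0) ->
  (forall j, j <= k -> eval_expr L [:: cpair n (code_prefix x j); q] <> 0) ->
  eval_expr (runE X L) [:: n; q] = a (cpair n (code_prefix x k)).
Proof.
move=> hB HXk HLk.
have Hc K : K <= k -> run_code X q K = code_prefix x K.
  by move=> hK; apply: run_code_prefix => m hm; apply: HXk; lia.
have X_avail K : 0 < K <= k -> eval_expr X [:: K.-1; q] == 0 = false.
  by move=> hK; apply/eqP/HXk; lia.
have searching K : K <= k -> prim_rec 0 (run_step X L n q) K = 0.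
  elim: K => [|K IH] hK //=; rewrite IH ?(ltnW hK) // /run_step eqxx.
  have -> : run_answer X L n q K = 0.
    rewrite /run_answer /run_probe Hc ?(ltnW hK) //.
    by case: (HL (cpair n (code_prefix x K))) => [/HLk|->]; [lia | rewrite /= Hlt].
  by case: (K =P 0) => // /eqP K0; rewrite X_avail // lt0n K0 ltnW.
have found : prim_rec 0 (run_step X L n q) k.+1 = (a (cpair n (code_prefix x k))).+1.
  rewrite /= searching // /run_step eqxx.
  have -> : run_answer X L n q k = (a (cpair n (code_prefix x k))).+1.
    rewrite /run_answer /run_probe Hc //.
    case: (HL (cpair n (code_prefix x k))) => [/HLk|->] //; first by lia.
    by move: Hk; case: (a _).
  by case: (k =P 0) => // /eqP k0; rewrite X_avail // lt0n k0 leqnn.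
rewrite runE_eval (@prim_rec_stable _ _ k.+1) ?found //.
exact: run_step_final.
Qed.

End RunCorrect.

Lemma run_approx X L p x a y : approximates X p x -> approximates L p a -> eta a x y ->
  approximates (runE X L) p y.
Proof.
move=> [X1 X2] [L1 L2] Ha; split.
- move=> n j; case: (Ha n) => k [Hk [Hlt Hy]].
  have := @run_sound X L n (code_prefix p j) a x (X1^~ j) (L1^~ j) k Hk Hlt.
  by case=> ->; [left|right; rewrite Hy; move: Hk; case: (a _)].
- move=> n; case: (Ha n) => k [Hk [Hlt Hy]].
  have [J HJ] := @eventually_forall_below
    (fun m j => eval_expr X [:: m; code_prefix p j] = (x m).+1) X2 k.
  have [J' HJ'] := @eventually_forall_below (fun m j =>
    eval_expr L [:: cpair n (code_prefix x m); code_prefix p j] =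
      (a (cpair n (code_prefix x m))).+1) (fun m => L2 _) k.+1.
  exists (maxn k (maxn J J')) => j hj.
  rewrite (@run_complete X L n (code_prefix p j) a x (X1^~ j) (L1^~ j) k Hk Hlt).
  + by rewrite Hy; move: Hk; case: (a _).
  + rewrite sizeE_prefix; lia.
  + by move=> m hm; rewrite HJ //; lia.
  + by move=> m hm; rewrite HJ' //; lia.
Qed.

(** * Computable operations on associates *)

Lemma eta_intro c p q :
  (forall n j, c (cpair n (code_prefix p j)) = 0 \/ c (cpair n (code_prefix p j)) = (q n).+1) ->
  (forall n, exists j, c (cpair n (code_prefix p j)) <> 0) -> eta c p q.
Proof.
move=> H1 H2 n.
have ex : exists j, c (cpair n (code_prefix p j)) != 0 by case: (H2 n) => j /eqP; exists j.
case: (ex_minnP ex) => k Hk Hmin; exists k; split; first by rewrite lt0n.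
split.
- move=> j hj; apply/eqP; apply: contraTT hj => /Hmin; lia.
- by case: (H1 n k) Hk => ->.
Qed.

Lemma eta_fun a p q1 q2 : eta a p q1 -> eta a p q2 -> q1 = q2.
Proof.
move=> H1 H2; apply: functional_extensionality => n.
case: (H1 n) => k1 [P1 [L1 ->]]; case: (H2 n) => k2 [P2 [L2 ->]].
case: (ltngtP k1 k2) => h.
- by move: (L2 _ h) P1 => ->.
- by move: (L1 _ h) P2 => ->.
- by rewrite h.
Qed.

Definition assoc (Phi : pexpr) := fun x => eval_expr Phi [:: unpair1 x; unpair2 x].

Lemma assoc_ok Phi : computable_expr Phi -> computable_nat (assoc Phi).
Proof.
move=> h; have := @compile_unary (EApp2 Phi (EApp1 unpair1E (EVar 0)) (EApp1 unpair2E (EVar 0))).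
case; first by rewrite /=; repeat split; auto with computable.
by move=> r Hr; exists r => x; move: (Hr x); rewrite /= unpair1E_eval unpair2E_eval.
Qed.

Lemma approx_eta Phi p q : approximates Phi p q -> eta (assoc Phi) p q.
Proof.
move=> [H1 H2]; apply: eta_intro => [n j|n]; rewrite /assoc ?unpair1_cpair ?unpair2_cpair //.
by case: (H2 n) => J HJ; exists J; rewrite unpair1_cpair unpair2_cpair HJ.
Qed.

Definition readE :=
  EApp3 ifzE (EApp2 ltbE (EVar 0) (EApp1 sizeE (EVar 1))) EZero
    (ESucc (EApp2 nthE (EVar 0) (EVar 1))).
Lemma readE_ok : computable_expr readE.
Proof. by rewrite /=; repeat split; auto with computable. Qed.
#[global] Hint Resolve readE_ok : computable.

Lemma readE_eval m p j : eval_expr readE [:: m; code_prefix p j] = if m < j then (p m).+1 else 0.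
Proof.
rewrite /= /code_prefix sizeE_eval ltbE_eval ifzE_eval size_prefix nthE_eval.
by case: (ltnP m j) => h //=; rewrite nth_prefix.
Qed.
#[global] Opaque readE.

Lemma read_approx p : approximates readE p p.
Proof.
split => [n j|n]; first by rewrite readE_eval; case: (n < j); [right|left].
by exists n.+1 => j hj; rewrite readE_eval hj.
Qed.

Definition totalE (s : nat -> nat) := ESucc (EFun s (EVar 0)).
Lemma totalE_ok s : computable_nat s -> computable_expr (totalE s). Proof. by []. Qed.

Lemma total_approx s p : approximates (totalE s) p s.
Proof. by split => [n j|n]; [right|exists 0]. Qed.

Definition simulE (a : nat -> nat) := runE readE (totalE a).
Lemma simulE_ok a : computable_nat a -> computable_expr (simulE a).
Proof. by move=> h; apply: runE_ok; auto with computable. Qed.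

Lemma simul_approx a p y : eta a p y -> approximates (simulE a) p y.
Proof. exact: run_approx (read_approx p) (total_approx a p). Qed.

Lemma pairB_even p q m : pairB p q m.*2 = p m.
Proof. by rewrite /pairB odd_double doubleK. Qed.
Lemma pairB_odd p q m : pairB p q m.*2.+1 = q m.
Proof. by rewrite /pairB /= odd_double /= uphalf_double. Qed.

Definition pairE (A B : pexpr) :=
  EApp3 ifzE (EApp2 subE (EVar 0) (EApp1 dblE (EApp1 halfE (EVar 0))))
    (EApp2 A (EApp1 halfE (EVar 0)) (EVar 1)) (EApp2 B (EApp1 halfE (EVar 0)) (EVar 1)).
Lemma pairE_ok A B : computable_expr A -> computable_expr B -> computable_expr (pairE A B).
Proof. by move=> *; rewrite /=; repeat split; auto with computable. Qed.

Lemma pairE_eval A B n q : eval_expr (pairE A B) [:: n; q] =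
  if odd n then eval_expr B [:: n./2; q] else eval_expr A [:: n./2; q].
Proof.
rewrite /= subE_eval dblE_eval halfE_eval ifzE_eval halfK.
case Hn: (odd n) => /=; last by rewrite subn0 subnn.
have n_pos : 0 < n by case: n Hn.
by rewrite ifF //; apply/eqP; lia.
Qed.

Lemma pair_approx A B p q1 q2 : approximates A p q1 -> approximates B p q2 ->
  approximates (pairE A B) p (pairB q1 q2).
Proof.
move=> [A1 A2] [B1 B2]; split => [n j|n]; rewrite ?pairE_eval /pairB.
- by case: (odd n); [apply: B1 | apply: A1].
- case Hn: (odd n); [case: (B2 n./2) | case: (A2 n./2)] => J HJ; exists J => j hj;
    by rewrite pairE_eval Hn HJ.
Qed.

Definition fstE := EApp2 readE (EApp1 dblE (EVar 0)) (EVar 1).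
Definition sndE := EApp2 readE (ESucc (EApp1 dblE (EVar 0))) (EVar 1).
Lemma fstE_ok : computable_expr fstE. Proof. by rewrite /=; repeat split; auto with computable. Qed.
Lemma sndE_ok : computable_expr sndE. Proof. by rewrite /=; repeat split; auto with computable. Qed.
#[global] Hint Resolve fstE_ok sndE_ok : computable.

Lemma fst_approx p q : approximates fstE (pairB p q) p.
Proof.
have Ev n j : eval_expr fstE [:: n; code_prefix (pairB p q) j] = if n.*2 < j then (p n).+1 else 0.
  by rewrite /= dblE_eval readE_eval pairB_even.
split => [n j|n]; first by rewrite Ev; case: (_ < _); [right|left].
by exists n.*2.+1 => j hj; rewrite Ev hj.
Qed.

Lemma snd_approx p q : approximates sndE (pairB p q) q.
Proof.
have Ev n j : eval_expr sndE [:: n; code_prefix (pairB p q) j] =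
    if n.*2.+1 < j then (q n).+1 else 0.
  by rewrite /= dblE_eval readE_eval pairB_odd.
split => [n j|n]; first by rewrite Ev; case: (_ < _); [right|left].
by exists n.*2.+2 => j hj; rewrite Ev hj.
Qed.

Definition universalE := runE sndE fstE.

Lemma universal_approx u x y : eta u x y -> approximates universalE (pairB u x) y.
Proof. exact: run_approx (snd_approx u x) (fst_approx u x). Qed.

Definition comp_assoc (a b : nat -> nat) := assoc (runE (simulE b) (totalE a)).
Definition pair_assoc a b := assoc (pairE (simulE a) (simulE b)).
Definition fst_assoc := assoc fstE.
Definition snd_assoc := assoc sndE.
Definition id_assoc := assoc readE.
Definition const_assoc s := assoc (totalE s).
Definition universal_assoc := assoc universalE.

Lemma comp_assoc_ok a b :
  computable_nat a -> computable_nat b -> computable_nat (comp_assoc a b).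
Proof. by move=> ha hb; apply/assoc_ok/runE_ok; [exact: simulE_ok | exact: totalE_ok]. Qed.

Lemma pair_assoc_ok a b :
  computable_nat a -> computable_nat b -> computable_nat (pair_assoc a b).
Proof. by move=> ha hb; apply/assoc_ok/pairE_ok; exact: simulE_ok. Qed.

Lemma fst_assoc_ok : computable_nat fst_assoc. Proof. exact: assoc_ok. Qed.
Lemma snd_assoc_ok : computable_nat snd_assoc. Proof. exact: assoc_ok. Qed.
Lemma id_assoc_ok : computable_nat id_assoc. Proof. exact: assoc_ok. Qed.
Lemma const_assoc_ok s : computable_nat s -> computable_nat (const_assoc s).
Proof. by move=> h; apply/assoc_ok/totalE_ok. Qed.
Lemma universal_assoc_ok : computable_nat universal_assoc.
Proof. by apply: assoc_ok; apply: runE_ok. Qed.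

Lemma comp_eta a b p q r : eta b p q -> eta a q r -> eta (comp_assoc a b) p r.
Proof.
by move=> hb ha; apply/approx_eta/(run_approx (simul_approx hb) (total_approx a p)).
Qed.

Lemma pair_eta a b p q r : eta a p q -> eta b p r -> eta (pair_assoc a b) p (pairB q r).
Proof. by move=> ha hb; apply/approx_eta/pair_approx; apply: simul_approx. Qed.

Lemma fst_eta p q : eta fst_assoc (pairB p q) p. Proof. exact/approx_eta/fst_approx. Qed.
Lemma snd_eta p q : eta snd_assoc (pairB p q) q. Proof. exact/approx_eta/snd_approx. Qed.
Lemma id_eta p : eta id_assoc p p. Proof. exact/approx_eta/read_approx. Qed.
Lemma const_eta s p : eta (const_assoc s) p s. Proof. exact/approx_eta/total_approx. Qed.
Lemma universal_eta u x y : eta u x y -> eta universal_assoc (pairB u x) y.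
Proof. by move=> h; apply/approx_eta/universal_approx. Qed.

(** * Weihrauch reductions, one solution at a time *)

Definition pick (A : Type) (P : A -> Prop) : option A :=
  match excluded_middle_informative (exists a, P a) with
  | left H => Some (proj1_sig (constructive_indefinite_description P H))
  | right _ => None
  end.

Lemma pick_some A (P : A -> Prop) a : pick P = Some a -> P a.
Proof.
rewrite /pick; case: excluded_middle_informative => // H [<-].
exact: proj2_sig.
Qed.

Lemma pick_ex A (P : A -> Prop) : (exists a, P a) -> exists a, pick P = Some a.
Proof.
by move=> H; rewrite /pick; case: excluded_middle_informative => [H1|/(_ H)//]; eexists.
Qed.

Section Realizers.
Variables (X Y : RepSpace) (f : mvf X Y).

Definition canon_realizer : Baire -> option Baire :=
  fun p => pick (fun q => exists x y, delta p x /\ delta q y /\ f x y).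

Lemma canon_realizerP : realizer f canon_realizer.
Proof.
move=> p x dp [y fxy]; have [q dq] := delta_surj y.
have [q' Hq'] : exists q', canon_realizer p = Some q'.
  by apply: pick_ex; exists q, x, y.
exists q'; split => //; have [x' [y' [dx [dy fx]]]] := pick_some Hq'.
by exists y'; rewrite (delta_fun dp dx).
Qed.

Lemma canon_realizer_sound p q : canon_realizer p = Some q ->
  exists x y, delta p x /\ delta q y /\ f x y.
Proof. exact: pick_some. Qed.

Definition update_realizer (G : Baire -> option Baire) p0 q0 : Baire -> option Baire :=
  fun p => if excluded_middle_informative (p = p0) then Some q0 else G p.

Lemma update_realizerP G p0 q0 : realizer f G ->
  (forall x, delta p0 x -> (exists y, f x y) -> exists y, delta q0 y /\ f x y) ->
  realizer f (update_realizer G p0 q0).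
Proof.
move=> HG H p x dp dom; rewrite /update_realizer.
destruct (excluded_middle_informative (p = p0)) as [->|ne]; last exact: HG.
by exists q0; split => //; apply: H.
Qed.

Lemma update_realizer_at G p0 q0 : update_realizer G p0 q0 p0 = Some q0.
Proof. by rewrite /update_realizer; case: excluded_middle_informative. Qed.

End Realizers.

(* Since realizers are arbitrary, a reduction must work for every solution of
   the instance it produces. *)
Definition reduces_via (X Y U V : RepSpace) (f : mvf X Y) (g : mvf U V) (a b : nat -> nat) :=
  forall p x, delta p x -> (exists y, f x y) ->
  exists h u, eta b p h /\ delta h u /\ (exists v, g u v) /\
    forall q v, delta q v -> g u v -> exists r y, eta a (pairB p q) r /\ delta r y /\ f x y.

Lemma W_leP (X Y U V : RepSpace) (f : mvf X Y) (g : mvf U V) :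
  W_le f g <-> exists a b, computable_nat a /\ computable_nat b /\ reduces_via f g a b.
Proof.
split=> -[a [b [ca [cb H]]]]; exists a, b; do 2!split => //.
- move=> p x dp dom.
  have [h [q [_ [Hb [Gh _]]]]] := H _ (@canon_realizerP _ _ g) p x dp dom.
  have [u [v [du [dv guv]]]] := canon_realizer_sound Gh.
  exists h, u; split=> //; split=> //; split; first by exists v.
  move=> q' v' dq' guv'.
  have HG : realizer g (update_realizer (canon_realizer g) h q').
    apply: update_realizerP; first exact: canon_realizerP.
    by move=> u' du' _; exists v'; rewrite (delta_fun du' du).
  have [h' [q'' [r [Hb' [Gh' [Ha sol]]]]]] := H _ HG p x dp dom.
  move: Gh'; rewrite (eta_fun Hb' Hb) update_realizer_at => -[Eq]; subst q''.
  by case: sol => y sol; exists r, y.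
- move=> G HG p x dp dom.
  have [h [u [Hb [du [[v guv] sol]]]]] := H p x dp dom.
  have [q [Gh [v' [dq guv']]]] := HG h u du (ex_intro _ v guv).
  have [r [y [Ha [dr fxy]]]] := sol q v' dq guv'.
  by exists h, q, r; do 3!split => //; exists y.
Qed.

Lemma reduces_via_trans (X Y U V S T : RepSpace) (f : mvf X Y) (g : mvf U V) (k : mvf S T)
    a1 b1 a2 b2 :
  reduces_via f g a1 b1 -> reduces_via g k a2 b2 ->
  reduces_via f k (comp_assoc a1 (pair_assoc fst_assoc
                     (comp_assoc a2 (pair_assoc (comp_assoc b1 fst_assoc) snd_assoc))))
                  (comp_assoc b2 b1).
Proof.
move=> H1 H2 p x dp dom.
have [h1 [u1 [Hb1 [du1 [dom1 sol1]]]]] := H1 p x dp dom.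
have [h2 [u2 [Hb2 [du2 [dom2 sol2]]]]] := H2 h1 u1 du1 dom1.
exists h2, u2; split; first exact: comp_eta Hb1 Hb2.
split=> //; split=> //.
move=> q v dq guv.
have [r1 [y1 [Ha2 [dr1 gy1]]]] := sol2 q v dq guv.
have [r [y [Ha1 [dr fy]]]] := sol1 r1 y1 dr1 gy1.
exists r, y; split => //; apply: comp_eta Ha1; apply: pair_eta; first exact: fst_eta.
apply: comp_eta Ha2; apply: pair_eta; last exact: snd_eta.
exact: comp_eta (fst_eta p q) Hb1.
Qed.

Lemma W_le_trans (X Y U V S T : RepSpace) (f : mvf X Y) (g : mvf U V) (k : mvf S T) :
  W_le f g -> W_le g k -> W_le f k.
Proof.
move=> /W_leP [a1 [b1 [ca1 [cb1 H1]]]] /W_leP [a2 [b2 [ca2 [cb2 H2]]]].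
apply/W_leP; do 2!eexists; split; last split; last exact: reduces_via_trans H1 H2.
- apply: comp_assoc_ok ca1 _; apply: pair_assoc_ok fst_assoc_ok _.
  apply: comp_assoc_ok ca2 _; apply: pair_assoc_ok snd_assoc_ok.
  exact: comp_assoc_ok cb1 fst_assoc_ok.
- exact: comp_assoc_ok.
Qed.

(** * A concrete upper bound for the composition product with finite choice *)

Lemma baire_fun (p x y : Baire) : p = x -> p = y -> x = y.
Proof. by move=> -> ->. Qed.

Lemma baire_surj (x : Baire) : exists p : Baire, p = x.
Proof. by exists x. Qed.

Definition BaireSpace : RepSpace :=
  {| carrier := Baire; delta := fun p x => p = x;
     delta_fun := baire_fun; delta_surj := baire_surj |}.

Definition fstB (z : Baire) : Baire := fun j => z j.*2.
Definition sndB (z : Baire) : Baire := fun j => z j.*2.+1.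

Lemma fstB_pair p q : fstB (pairB p q) = p.
Proof. by apply: functional_extensionality => j; rewrite /fstB pairB_even. Qed.

Lemma sndB_pair p q : sndB (pairB p q) = q.
Proof. by apply: functional_extensionality => j; rewrite /sndB pairB_odd. Qed.

Lemma pairB_split z : pairB (fstB z) (sndB z) = z.
Proof.
apply: functional_extensionality => m; rewrite /pairB /fstB /sndB.
by case Hm: (odd m); congr z; rewrite -[RHS](odd_double_half m) Hm; lia.
Qed.

Lemma fst_eta_split z : eta fst_assoc z (fstB z).
Proof. by rewrite -{1}(pairB_split z); exact: fst_eta. Qed.

Lemma snd_eta_split z : eta snd_assoc z (sndB z).
Proof. by rewrite -{1}(pairB_split z); exact: snd_eta. Qed.

Definition fin_name (i : nat) : Baire := fun _ => i.+1.

Section StarFin.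
Variables (n : nat) (U V : RepSpace) (g : mvf U V).

(* An instance [z = <A, <c, p>>] of [star_fin] names a set [A] of choices and
   an associate [c] sending [<p, i>], for each [i] in [A], to a name of an
   instance of [g]; a solution [<i, t>] is a choice [i] in [A] with a name [t]
   of a solution of the [i]-th instance. *)
Definition star_instance (z : Baire) (i : 'I_n) (u : U) :=
  exists s, eta (fstB (sndB z)) (pairB (sndB (sndB z)) (fin_name i)) s /\ delta s u.

Definition star_fin : mvf BaireSpace BaireSpace := fun (z r : Baire) =>
  exists A : {set 'I_n}, subset_name (fstB z) A /\
    (forall i, i \in A -> exists u, star_instance z i u /\ exists v, g u v) /\
    exists i, i \in A /\
      exists u t v, star_instance z i u /\ delta t v /\ g u v /\ r = pairB (fin_name i) t.

Section CompositionBound.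
Variables (X' Y' Z' : RepSpace) (f' : mvf Y' Z') (g' : mvf X' Y') (af bf ag bg : nat -> nat).
Hypothesis f'_le_g : reduces_via f' g af bf.
Hypothesis g'_le_C : reduces_via g' (C_fin n) ag bg.

Definition star_out :=
  comp_assoc af (pair_assoc
    (comp_assoc ag (pair_assoc fst_assoc (comp_assoc fst_assoc snd_assoc)))
    (comp_assoc snd_assoc snd_assoc)).
Definition star_in := pair_assoc bg (pair_assoc (const_assoc (comp_assoc bf ag)) id_assoc).

Lemma mv_comp_reduces_via_star : reduces_via (mv_comp f' g') star_fin star_out star_in.
Proof.
move=> p x dp [_ [f'_dom [y0 [gxy0 _]]]].
have [h0 [A [Hb0 [dA [[i0 i0A] choose]]]]] := g'_le_C dp (ex_intro _ y0 gxy0).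
have chain i : i \in A -> exists r1 y, eta ag (pairB p (fin_name i)) r1 /\ delta r1 y /\
    g' x y /\ exists s u, eta bf r1 s /\ delta s u /\ (exists v, g u v) /\
    forall t v, delta t v -> g u v -> exists r2 w, eta af (pairB r1 t) r2 /\ delta r2 w /\ f' y w.
  move=> iA; have [r1 [y [Ha [dr1 gy]]]] := choose (fin_name i) i erefl iA.
  by exists r1, y; do 3!split => //; apply: f'_le_g dr1 (f'_dom y gy).
pose z := pairB h0 (pairB (comp_assoc bf ag) p).
have [Ez1 Ez2 Ez3] : [/\ fstB z = h0, fstB (sndB z) = comp_assoc bf ag & sndB (sndB z) = p].
  by rewrite /z !sndB_pair !fstB_pair.
have inst i : i \in A -> exists u, star_instance z i u /\ exists v, g u v.
  move=> /chain [r1 [y [Ha [_ [_ [s [u [Hb [du [dom _]]]]]]]]]].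
  by exists u; split => //; exists s; rewrite Ez2 Ez3; split => //; exact: comp_eta Ha Hb.
exists z, z; split.
  by apply: pair_eta => //; apply: pair_eta; [exact: const_eta | exact: id_eta].
split => //; split.
  have [u [Iu [v guv]]] := inst i0 i0A; have [t dt] := delta_surj v.
  exists (pairB (fin_name i0) t), A; rewrite Ez1; do 2!split => //.
  by exists i0; split => //; exists u, t, v.
move=> _ r <- [A' [dA' [_ [i [iA' [u [t [v [[s [Hs du]] [dt [guv ->]]]]]]]]]]].
rewrite Ez1 in dA'; rewrite (subsp_fun dA' dA) in iA'; rewrite Ez2 Ez3 in Hs.
have [r1 [y [Ha [dr1 [gy [s' [u' [Hb [du' [_ sol]]]]]]]]]] := chain i iA'.
have Es : s' = s by apply: eta_fun (comp_eta Ha Hb) Hs.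
subst s'; rewrite (delta_fun du' du) in sol.
have [r2 [w [Ha2 [dr2 fyw]]]] := sol t v dt guv.
exists r2, w; split; last by split => //; split => //; exists y.
apply: comp_eta Ha2; apply: pair_eta.
- apply: comp_eta Ha; apply: pair_eta; first exact: fst_eta.
  by apply: comp_eta (fst_eta _ _); exact: snd_eta.
- by apply: comp_eta (snd_eta _ _); exact: snd_eta.
Qed.

End CompositionBound.

Lemma comp_le_star_fin (X' Y' Z' : RepSpace) (f' : mvf Y' Z') (g' : mvf X' Y') :
  W_le f' g -> W_le g' (C_fin n) -> W_le (mv_comp f' g') star_fin.
Proof.
move=> /W_leP [af [bf [caf [cbf Hf]]]] /W_leP [ag [bg [cag [cbg Hg]]]].
apply/W_leP; exists (star_out af ag), (star_in bf ag bg).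
split; last split; last exact: mv_comp_reduces_via_star.
- apply: comp_assoc_ok caf _; apply: pair_assoc_ok.
  + apply: comp_assoc_ok cag _; apply: pair_assoc_ok fst_assoc_ok _.
    exact: comp_assoc_ok fst_assoc_ok snd_assoc_ok.
  + exact: comp_assoc_ok snd_assoc_ok snd_assoc_ok.
- apply: pair_assoc_ok cbg _; apply: pair_assoc_ok id_assoc_ok.
  exact/const_assoc_ok/comp_assoc_ok.
Qed.

End StarFin.

(** * Finite choice is eliminated on a clopen piece *)

Lemma code_prefix_agree p p' L k :
  (forall i, i < L -> p' i = p i) -> k <= L -> code_prefix p' k = code_prefix p k.
Proof.
move=> H hk; rewrite /code_prefix /Defs.prefix; congr code_seq; apply/eq_in_map => i.
rewrite mem_iota add0n => hi; apply: H; lia.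
Qed.

Lemma eta_continuous a p q N : eta a p q -> exists L, forall p' q', eta a p' q' ->
  (forall i, i < L -> p' i = p i) -> forall j, j < N -> q' j = q j.
Proof.
move=> Hq.
have one j : exists L, forall L', L <= L' -> forall p' q', eta a p' q' ->
    (forall i, i < L' -> p' i = p i) -> q' j = q j.
  case: (Hq j) => k [Pk [Lk Ek]]; exists k => L' hL' p' q' Hq' Hag.
  case: (Hq' j) => k' [Pk' [Lk' Ek']].
  have E kk : kk <= k -> code_prefix p' kk = code_prefix p kk.
    by move=> hk; apply: (code_prefix_agree Hag); lia.
  case: (ltngtP k' k) => h.
  - by move: (Lk _ h) Pk'; rewrite /code_prefix in E *; rewrite E ?(ltnW h) // => ->.
  - by move: (Lk' _ h) Pk; rewrite /code_prefix in E *; rewrite E // => ->.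
  - by subst k'; rewrite Ek Ek' /code_prefix in E *; rewrite E.
have [L HL] := @eventually_forall_below (fun j L' => forall p' q', eta a p' q' ->
  (forall i, i < L' -> p' i = p i) -> q' j = q j) one N.
by exists L => p' q' Hq' Hag j hj; exact: (HL L (leqnn L) j hj p' q' Hq' Hag).
Qed.

Lemma bounded_max (P : nat -> Prop) B s0 : P s0 -> (forall s, P s -> s <= B) ->
  exists s, P s /\ forall s', P s' -> s' <= s.
Proof.
move=> Ps0 HB.
pose Pb s := if excluded_middle_informative (P s) then true else false.
have PbP s : Pb s <-> P s by rewrite /Pb; case: excluded_middle_informative.
have exP : exists s, Pb s by exists s0; apply/PbP.
have [s /PbP Ps smax] := ex_maxnP exP (fun s => (HB s) \o (PbP s).1).
by exists s; split => // s' /PbP; exact: smax.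
Qed.

Definition cylinder (p0 : Baire) L := fun p : Baire => forall i, i < L -> p i = p0 i.

Lemma clopen_cylinder p0 L : clopenB (cylinder p0 L).
Proof.
split => p Hp; exists L => q Hq.
- by move=> i hi; rewrite Hq // Hp.
- by move=> Hc; apply: Hp => i hi; rewrite -Hq // Hc.
Qed.

Definition enumerated n (z : Baire) m : {set 'I_n} :=
  [set i : 'I_n | has (fun j => z j == i.+1) (iota 0 m)].

Lemma subset_names_stabilize n (N : Baire -> Prop) (b : nat -> nat) :
  (exists p, N p) -> (forall p, N p -> exists z, eta b p z) ->
  exists (W : Baire -> Prop) (R : {set 'I_n}), clopenB W /\ (exists p, W p /\ N p) /\
    forall p z A, N p -> W p -> eta b p z -> subset_name z A -> A = ~: R.
Proof.
move=> [p0 Np0] dom.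
pose S s := exists p z m, N p /\ eta b p z /\ #|enumerated n z m| = s.
have [z0 Hz0] := dom p0 Np0.
have [M [[p1 [z1 [m1 [Np1 [Hz1 cardM]]]]] Mmax]] : exists M, S M /\ forall s, S s -> s <= M.
  apply: (@bounded_max S n (#|enumerated n z0 0|)); first by exists p0, z0, 0.
  by move=> s [p [z [m [_ [_ <-]]]]]; rewrite -[X in _ <= X]card_ord max_card.
have [L HL] := eta_continuous m1 Hz1.
exists (cylinder p1 L), (enumerated n z1 m1); split; first exact: clopen_cylinder.
split; first by exists p1.
move=> p z A Np Wp Hz sA.
have agree j : j < m1 -> z j = z1 j by exact: HL Hz Wp j.
have grown m : m1 <= m -> enumerated n z m = enumerated n z1 m1.
  move=> hm; apply/eqP; rewrite eq_sym eqEcard; apply/andP; split.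
  - apply/subsetP => i; rewrite !inE => /hasP [j]; rewrite mem_iota add0n => hj e.
    by apply/hasP; exists j; [rewrite mem_iota; lia | rewrite agree].
  - by rewrite cardM; apply: Mmax; exists p, z, m.
apply/setP => i; rewrite in_setC; apply/idP/idP.
- move=> /sA Hi; apply/negP; rewrite !inE => /hasP [j]; rewrite mem_iota add0n => hj /eqP e.
  by apply: Hi; exists j; rewrite agree.
- move=> Hi; apply/sA => -[j e]; move/negP: Hi; apply.
  rewrite -(grown (maxn m1 j.+1)) ?leq_maxl // inE; apply/hasP.
  by exists j; [rewrite mem_iota; lia | rewrite e].
Qed.

Section StableChoice.
Variables (n : nat) (U V X0 Y0 : RepSpace) (g : mvf U V) (F : mvf X0 Y0) (a b : nat -> nat).
Hypothesis F_le_star : reduces_via F (star_fin n g) a b.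
Variables (W : Baire -> Prop) (R : {set 'I_n}) (i0 : 'I_n).
Hypothesis W_stable : forall p z A, (exists x : X0, delta p x) -> W p ->
  eta (comp_assoc fst_assoc b) p z -> subset_name z A -> A = ~: R.
Hypothesis i0_notin : i0 \notin R.

Definition stable_in :=
  comp_assoc universal_assoc (pair_assoc (comp_assoc fst_assoc (comp_assoc snd_assoc b))
    (pair_assoc (comp_assoc snd_assoc (comp_assoc snd_assoc b)) (const_assoc (fin_name i0)))).
Definition stable_out :=
  comp_assoc a (pair_assoc fst_assoc (pair_assoc (const_assoc (fin_name i0)) snd_assoc)).

Lemma stable_in_ok : computable_nat b -> computable_nat stable_in.
Proof.
move=> cb; have ci0 := const_assoc_ok (computable_const i0.+1).
have csb := comp_assoc_ok snd_assoc_ok cb.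
exact: comp_assoc_ok universal_assoc_ok (pair_assoc_ok (comp_assoc_ok fst_assoc_ok csb)
  (pair_assoc_ok (comp_assoc_ok snd_assoc_ok csb) ci0)).
Qed.

Lemma stable_out_ok : computable_nat a -> computable_nat stable_out.
Proof.
move=> ca; have ci0 := const_assoc_ok (computable_const i0.+1).
exact: comp_assoc_ok ca (pair_assoc_ok fst_assoc_ok (pair_assoc_ok ci0 snd_assoc_ok)).
Qed.

Lemma restr_reduces_via_stable : reduces_via (restr_mvf F W) g stable_out stable_in.
Proof.
move=> p x [Wp dp] dom.
have [z [_ [Hz [<- [[r0 [A [sA [inst _]]]] sol]]]]] := F_le_star dp dom.
have EA : A = ~: R.
  by apply: W_stable (ex_intro _ _ dp) Wp (comp_eta Hz (fst_eta_split _)) sA.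
have i0A : i0 \in A by rewrite EA inE.
have [u [[s [Hs du]] [v guv]]] := inst i0 i0A.
exists s, u; split.
  have Hsz := comp_eta Hz (snd_eta_split _).
  apply: comp_eta (universal_eta Hs); apply: pair_eta; first exact: comp_eta Hsz (fst_eta_split _).
  by apply: pair_eta; [exact: comp_eta Hsz (snd_eta_split _) | exact: const_eta].
split=> //; split; first by exists v.
move=> t v' dt guv'.
have [r [y [Ha [dr Fxy]]]] : exists r y, eta a (pairB p (pairB (fin_name i0) t)) r /\
    delta r y /\ F (proj1_sig x) y.
  apply: (sol _ _ erefl); exists A; do 2!split => //.
  by exists i0; split => //; exists u, t, v'; split; [exists s | ].
exists r, y; split=> //; apply: comp_eta Ha; apply: pair_eta; first exact: fst_eta.
by apply: pair_eta; [exact: const_eta | exact: snd_eta].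
Qed.

End StableChoice.

Lemma star_fin_locally_le n (U V X0 Y0 : RepSpace) (g : mvf U V) (F : mvf X0 Y0) (x0 : X0) :
  (forall x, exists y, F x y) -> W_le F (star_fin n g) ->
  exists W, clopenB W /\ (exists p (x : X0), W p /\ delta p x) /\ W_le (restr_mvf F W) g.
Proof.
move=> F_total /W_leP [a [b [ca [cb Hab]]]].
pose N p := exists x : X0, delta p x.
have named p : N p -> exists z (A : {set 'I_n}),
    eta (comp_assoc fst_assoc b) p z /\ subset_name z A /\ exists i, i \in A.
  move=> [x dp]; have [z [_ [Hz [<- [[r [A [sA [_ [i [iA _]]]]]] _]]]]] := Hab p x dp (F_total x).
  by exists (fstB z), A; split; [exact: comp_eta Hz (fst_eta_split _) | split => //; exists i].
have [W [R [cW [[p1 [Wp1 Np1]] W_stable]]]] :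
    exists W (R : {set 'I_n}), clopenB W /\ (exists p, W p /\ N p) /\
      forall p z A, N p -> W p -> eta (comp_assoc fst_assoc b) p z -> subset_name z A -> A = ~: R.
  apply: subset_names_stabilize; first by have [p dp] := delta_surj x0; exists p, x0.
  by move=> p /named [z [_ [Hz _]]]; exists z.
have [z [A [Hz [sA [i0 i0A]]]]] := named p1 Np1.
have i0_notin : i0 \notin R by rewrite -in_setC -(W_stable p1 z A Np1 Wp1 Hz sA).
exists W; split=> //; split; first by case: Np1 => x dp1; exists p1, x.
apply/W_leP; exists (stable_out a i0), (stable_in b i0).
split; [exact: stable_out_ok | split; [exact: stable_in_ok |]].
exact: restr_reduces_via_stable W_stable i0_notin.
Qed.

Lemma restr_full_le (X Y : RepSpace) (F : mvf X Y) : W_le F (restr_mvf F (fun _ => True)).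
Proof.
apply/W_leP; exists snd_assoc, id_assoc; split; first exact: snd_assoc_ok.
split=> [|p x dp [y Fxy]]; first exact: id_assoc_ok.
exists p, (exist _ x (ex_intro _ p (conj I dp))); split; first exact: id_eta.
split=> //; split=> [|q v dq Fxv]; first by exists y.
by exists q, v; split=> //; exact: snd_eta.
Qed.

Lemma not_le_nowhere (X Y : RepSpace) (F : mvf X Y) p x :
  delta p x -> (exists y, F x y) -> ~ W_le F nowhere.
Proof.
move=> dp dom /W_leP [a [b [_ [_ H]]]].
by have [h [u [_ [_ [[[] []]]]]]] := H p x dp dom.
Qed.

Lemma fractal_piece (U0 V0 X Y : RepSpace) (g0 : mvf U0 V0) (f : mvf X Y) W :
  (forall u, exists v, g0 u v) -> (exists p (u : U0), W p /\ delta p u) ->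
  W_eq (restr_mvf g0 W) f \/ W_eq (restr_mvf g0 W) nowhere -> W_eq (restr_mvf g0 W) f.
Proof.
move=> g0_total [p [u [Wp dp]]] [//|[g0W_le _]]; exfalso.
have [v guv] := g0_total u.
have dx : delta p (exist _ u (ex_intro _ p (conj Wp dp)) : RestrSpace U0 W) by [].
exact: not_le_nowhere dx (ex_intro _ v guv) g0W_le.
Qed.

Lemma clopen_full : clopenB (fun _ => True).
Proof. by split => p H; [exists 0 | exfalso; apply: H]. Qed.

Theorem theorem12 (X Y U V : RepSpace) (f : mvf X Y) (g : mvf U V) (n : nat) :
  fractal f -> 1 <= n ->
  (exists (C D : RepSpace) (h : mvf C D),
      is_comp_product g (C_fin n) h /\ W_le f h) ->
  W_le f g.
Proof.
move=> [U0 [V0 [g0 [[u0 _] [g0_total pieces]]]]] _ [C [D [h [[_ h_least] f_le_h]]]].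
have h_le_star : W_le h (star_fin n g).
  by apply: h_least => X' Y' Z' f' g'; exact: comp_le_star_fin.
have [g0_le_f _] : W_eq (restr_mvf g0 (fun _ => True)) f.
  apply: fractal_piece g0_total _ (pieces _ clopen_full).
  by have [p dp] := delta_surj u0; exists p, u0.
have g0_le_star : W_le g0 (star_fin n g).
  exact: W_le_trans (restr_full_le _) (W_le_trans g0_le_f (W_le_trans f_le_h h_le_star)).
have [W [cW [named g0W_le_g]]] := star_fin_locally_le u0 g0_total g0_le_star.
have [_ f_le_g0W] := fractal_piece g0_total named (pieces W cW).
exact: W_le_trans f_le_g0W g0W_le_g.
Qed.
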